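(* Let $X$ be a locally path connected and semilocally simply connected space. Then the CO' topology on $\Pi_1(X)$ is coarser than the UC topology, i.e. every CO'-open subset of $\Pi_1(X)$ is UC-open. More precisely, for every CO'-open set $M\subseteq\Pi_1(X)$ and every $[\alpha]\in M$ there are open neighbourhoods $V^1$ of $\alpha(1)$ and $V^0$ of $\alpha(0)$ in $X$ with $N([\alpha],V^1,V^0)\subseteq M$.
   Context: For a space $X$, $\mathcal P X=C([0,1],X)$ is the set of paths, with the compact-open topology. For paths $\gamma,\eta$ with $\gamma(0)=\eta(1)$, $\gamma\,\Box\,\eta$ denotes the concatenated path which first traverses $\eta$ and then $\gamma$; $[\gamma]$ denotes the endpoint-fixing path-homotopy class of $\gamma$, and $\Pi_1(X)$ is the set of all such classes. A subset $V\subseteq X$ is relatively inessential if for $x\in V$ the homomorphism $\pi_1(V,x)\to\pi_1(X,x)$ induced by inclusion is trivial; $X$ is semilocally simply connected if every point has a relatively inessential neighbourhood. The CO' topology on $\Pi_1(X)$ is the quotient topology induced from $\mathcal P X$ by $q\colon\gamma\mapsto[\gamma]$. For $[\gamma]\in\Pi_1(X)$ and open sets $U\ni\gamma(1)$, $V\ni\gamma(0)$, let $N([\gamma],U,V)=\{[\delta\,\Box\,\gamma\,\Box\,\theta] : \delta\text{ a path in }U\text{ with }\delta(0)=\gamma(1),\ \theta\text{ a path in }V\text{ with }\theta(1)=\gamma(0)\}$. The UC topology is the topology generated by the sets $N([\gamma],U,V)$ with $U,V$ path connected relatively inessential open neighbourhoods of $\gamma(1)$, $\gamma(0)$. *)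

From HB Require Import structures.
From mathcomp Require Import all_boot all_order all_algebra.
From mathcomp Require Import all_classical all_reals all_analysis.
Set Implicit Arguments. Unset Strict Implicit. Unset Printing Implicit Defensive.
Import Order.TTheory GRing.Theory Num.Theory numFieldNormedType.Exports.
Local Open Scope classical_set_scope.
Local Open Scope ring_scope.

Section fundamental_groupoid.
Variables (R : realType) (X : topologicalType).

Definition unitI : set R := `[0, 1]%classic.

(* a path is a map R -> X that is continuous on [0,1] (only its values on
   [0,1] matter; maps agreeing on [0,1] are path-homotopic, hence give the
   same class and the quotient topology is unaffected) *)
Definition is_path (f : R -> X) : Prop := {within unitI, continuous f}.

Definition path_in (U : set X) (f : R -> X) : Prop :=
  is_path f /\ f @` unitI `<=` U.

(* g [] e : first traverse e, then g *)
Definition pconcat (g e : R -> X) : R -> X :=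
  fun s => if s <= 2^-1 then e (2 * s) else g (2 * s - 1).

Definition phomotopic (f g : R -> X) : Prop :=
  exists H : R * R -> X,
    [/\ {within unitI `*` unitI, continuous H},
        (forall s, unitI s -> H (s, 0) = f s),
        (forall s, unitI s -> H (s, 1) = g s),
        (forall t, unitI t -> H (0, t) = f 0) &
        (forall t, unitI t -> H (1, t) = f 1)].

Definition phclass (f : R -> X) : set (R -> X) :=
  [set g | is_path g /\ phomotopic f g].

Definition Pi1 : set (set (R -> X)) := [set phclass f | f in is_path].

(* open sets of the compact-open topology on the path space, via the
   subbasis { g | g(K) c= O }, K c= [0,1] compact, O open *)
Definition CO_open (S : set (R -> X)) : Prop :=
  S `<=` is_path /\
  forall g, S g -> exists (n : nat) (K : nat -> set R) (O : nat -> set X),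
    (forall i, (i < n)%N ->
        [/\ K i `<=` unitI, compact (K i), open (O i) & g @` K i `<=` O i]) /\
    (forall h, is_path h -> (forall i, (i < n)%N -> h @` K i `<=` O i) -> S h).

(* CO' topology: quotient topology induced by q : f |-> [f] *)
Definition COq_open (M : set (set (R -> X))) : Prop :=
  M `<=` Pi1 /\ CO_open [set f | is_path f /\ M (phclass f)].

Definition Nbd (g : R -> X) (U V : set X) : set (set (R -> X)) :=
  [set phclass (pconcat (pconcat d g) t) | d in
     [set d | path_in U d /\ d 0 = g 1] & t in
     [set t | path_in V t /\ t 1 = g 0]].

Definition path_connected (W : set X) : Prop :=
  forall a b, W a -> W b -> exists f, [/\ path_in W f, f 0 = a & f 1 = b].

Definition locally_path_connected : Prop :=
  forall (x : X) (U : set X), open U -> U x ->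
    exists W, [/\ open W, W x, W `<=` U & path_connected W].

Definition cst_path (x : X) : R -> X := fun _ => x.

(* pi_1(V,x) -> pi_1(X,x) trivial for every x in V *)
Definition rel_inessential (V : set X) : Prop :=
  forall x, V x -> forall f, path_in V f -> f 0 = x -> f 1 = x ->
    phomotopic f (cst_path x).

Definition semilocally_simply_connected : Prop :=
  forall x : X, exists V, nbhs x V /\ rel_inessential V.

End fundamental_groupoid.

From HB Require Import structures.
From mathcomp Require Import all_boot all_order all_algebra.
From mathcomp Require Import all_classical all_reals all_analysis.
From mathcomp Require Import ring lra.
Import Order.TTheory GRing.Theory Num.Theory numFieldNormedType.Exports.
Local Open Scope classical_set_scope.
Local Open Scope ring_scope.
Set Implicit Arguments.
Unset Strict Implicit.
Unset Printing Implicit Defensive.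

(* Let M be CO'-open with [alpha] in M.  Its preimage in
   the path space is compact-open open, so it contains a basic neighbourhood
   { g | g(K_i) c= O_i, i < n } of alpha.  Let V_c (c = 0, 1) be the
   intersection of the O_i whose compact set K_i contains the time c.  Given
   paths delta in V1 and theta in V0, the concatenation
   gam = delta [] alpha [] theta is reparametrized by a homeomorphism
   "squeeze" of [0,1] fixing 0 and 1 which runs through theta and a short
   initial piece of alpha in time eps, through alpha at unit speed on
   [eps, 1 - eps], and through the rest of alpha and delta in the final eps.
   Since the K_i are closed, for eps small enough ("collars") K_i meets
   [0, eps] only if 0 is in K_i, in which case alpha([0, eps]) c= O_i, and
   likewise at 1; hence gam o squeeze satisfies every constraint, so its
   class, which is [gam] because reparametrization preserves classes, is in
   M. *)

Lemma continuous_within_comp {T U V : topologicalType} (A : set T) (B : set U)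
    (m : T -> U) (h : U -> V) :
  {within A, continuous m} -> (forall x, A x -> B (m x)) ->
  {within B, continuous h} -> {within A, continuous (h \o m)}.
Proof.
move=> /subspace_continuousP cm AB /subspace_continuousP ch.
apply/subspace_continuousP => x Ax W /= hW.
have := cm x Ax _ (ch (m x) (AB x Ax) W hW).
rewrite /from_subspace !nbhs_simpl /= /within /=.
by apply: filterS => y /= mW Ay; exact: mW Ay (AB y Ay).
Qed.

Section real_continuity.
Variable R : realType.

Lemma fst_cont : continuous (fun p : R * R => p.1).
Proof. by move=> [a b]; exact: cvg_fst. Qed.

Lemma snd_cont : continuous (fun p : R * R => p.2).
Proof. by move=> [a b]; exact: cvg_snd. Qed.

Lemma pair_cont {T : topologicalType} (f g : T -> R) :
  continuous f -> continuous g -> continuous (fun x => (f x, g x)).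
Proof. by move=> cf cg x; exact: cvg_pair (cf x) (cg x). Qed.

Lemma add_cont {T : topologicalType} (f g : T -> R) :
  continuous f -> continuous g -> continuous (fun x => f x + g x).
Proof. by move=> cf cg x; exact: (@continuousD _ R^o _ f g x (cf x) (cg x)). Qed.

Lemma sub_cont {T : topologicalType} (f g : T -> R) :
  continuous f -> continuous g -> continuous (fun x => f x - g x).
Proof. by move=> cf cg x; exact: (@continuousB _ R^o _ f g x (cf x) (cg x)). Qed.

Lemma mul_cont {T : topologicalType} (f g : T -> R) :
  continuous f -> continuous g -> continuous (fun x => f x * g x).
Proof. by move=> cf cg x; exact: (@continuousM R _ f g x (cf x) (cg x)). Qed.

Lemma id_cont : continuous (fun x : R => x).
Proof. by move=> x. Qed.
End real_continuity.

Section unit_interval.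
Variable R : realType.

Lemma itvccP (a b x : R) : `[a, b]%classic x <-> a <= x /\ x <= b.
Proof. by rewrite /= in_itv /=; split => [/andP//|[-> ->]]. Qed.

Lemma unitI0 : @unitI R 0.
Proof. by apply/itvccP; lra. Qed.

Lemma unitI1 : @unitI R 1.
Proof. by apply/itvccP; lra. Qed.

Lemma closed_unit_square : closed (@unitI R `*` @unitI R).
Proof.
apply: closedI.
  by apply: (proj1 (continuous_closedP _) (@fst_cont R)); exact: itv_closed.
by apply: (proj1 (continuous_closedP _) (@snd_cont R)); exact: itv_closed.
Qed.

Lemma continuous_glue_half {T U : topologicalType} (A : set T) (p : T -> R)
    (f g : T -> U) :
  closed A -> continuous p ->
  {within A `&` [set x | p x <= 2^-1], continuous f} ->
  {within A `&` [set x | 2^-1 <= p x], continuous g} ->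
  (forall x, A x -> p x = 2^-1 -> f x = g x) ->
  {within A, continuous (fun x => if p x <= 2^-1 then f x else g x)}.
Proof.
move=> cA cp cf cg fg.
have cle : closed (A `&` [set x | p x <= 2^-1]).
  apply: closedI => //; have cl := (continuous_closedP p).1 cp _ (@closed_le R (2^-1)).
  exact: cl.
have cge : closed (A `&` [set x | 2^-1 <= p x]).
  apply: closedI => //; have cl := (continuous_closedP p).1 cp _ (@closed_ge R (2^-1)).
  exact: cl.
have -> : A = (A `&` [set x | p x <= 2^-1]) `|` (A `&` [set x | 2^-1 <= p x]).
  rewrite -setIUr; apply/seteqP; split => [x Ax|x []//].
  by split => //; case: (lerP (p x) (2^-1)) => h; [left|right; exact: ltW].
apply: withinU_continuous; [exact: cle|exact: cge| |].
- apply: subspace_eq_continuous cf => x; rewrite inE => -[_ /= px].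
  by rewrite /from_subspace px.
- apply: subspace_eq_continuous cg => x; rewrite inE => -[Ax /= px].
  rewrite /from_subspace; case: ifP => // pl; rewrite fg //.
  by apply/eqP; rewrite eq_le pl px.
Qed.
End unit_interval.

Arguments unitI0 {R}.
Arguments unitI1 {R}.

Section paths.
Variables (R : realType) (X : topologicalType).
Implicit Types (f g e k gam : R -> X) (r : R -> R).

Lemma pconcat_path g e : is_path g -> is_path e -> e 1 = g 0 ->
  is_path (pconcat g e).
Proof.
move=> pg pe eg; apply: (@continuous_glue_half R _ _ _ id); first exact: itv_closed.
- exact: id_cont.
- apply: (@continuous_within_comp _ _ _ _ (@unitI R)) pe.
    by apply: continuous_subspaceT; apply: mul_cont; [exact: cst_continuous|exact: id_cont].
  by move=> s [/itvccP [s0 _] /= s1]; apply/itvccP; lra.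
- apply: (@continuous_within_comp _ _ _ _ (@unitI R)) pg.
    apply: continuous_subspaceT; apply: sub_cont; last exact: cst_continuous.
    by apply: mul_cont; [exact: cst_continuous|exact: id_cont].
  by move=> s [/itvccP [_ s1] /= s0]; apply/itvccP; lra.
- by move=> s _ /= ->; rewrite mulfV // subrr.
Qed.

(* Path homotopy is transitive: run the two homotopies at double speed. *)
Lemma phom_trans f g k : phomotopic f g -> phomotopic g k -> phomotopic f k.
Proof.
move=> [H1 [c1 a1 b1 l1 r1]] [H2 [c2 a2 b2 l2 r2]].
have g0 : g 0 = f 0 by rewrite -(b1 0 unitI0) (l1 1 unitI1).
have g1 : g 1 = f 1 by rewrite -(b1 1 unitI1) (r1 1 unitI1).
exists (fun p => if p.2 <= 2^-1 then H1 (p.1, 2 * p.2) else H2 (p.1, 2 * p.2 - 1)).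
split.
- apply: (@continuous_glue_half R _ _ _ (fun p : R * R => p.2)
    (H1 \o fun p => (p.1, 2 * p.2)) (H2 \o fun p => (p.1, 2 * p.2 - 1))).
  + exact: closed_unit_square.
  + exact: snd_cont.
  + apply: (@continuous_within_comp _ _ _ _ (@unitI R `*` @unitI R)) c1.
      apply: continuous_subspaceT; apply: pair_cont; first exact: fst_cont.
      by apply: mul_cont; [exact: cst_continuous|exact: snd_cont].
    by move=> [s u] /= [[s01 /itvccP [u0 _]] u1]; split => //; apply/itvccP; lra.
  + apply: (@continuous_within_comp _ _ _ _ (@unitI R `*` @unitI R)) c2.
      apply: continuous_subspaceT; apply: pair_cont; first exact: fst_cont.
      apply: sub_cont; last exact: cst_continuous.
      by apply: mul_cont; [exact: cst_continuous|exact: snd_cont].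
    by move=> [s u] /= [[s01 /itvccP [_ u1]] u0]; split => //; apply/itvccP; lra.
  + by move=> [s u] [s01 _] /= ->; rewrite mulfV // subrr b1 // a2.
- by move=> s s01 /=; rewrite ifT ?mulr0 ?a1 //; lra.
- move=> s s01 /=; rewrite ifF; last by apply/negbTE; rewrite -ltNge; lra.
  by rewrite mulr1 (_ : 2 - 1 = 1 :> R) ?b2 //; lra.
- move=> t /itvccP [t0 t1] /=; case: ifP => h.
    by rewrite l1 //; apply/itvccP; lra.
  by rewrite l2 ?g0 //; apply/itvccP; move/negbT: h; rewrite -ltNge => h; lra.
- move=> t /itvccP [t0 t1] /=; case: ifP => h.
    by rewrite r1 //; apply/itvccP; lra.
  by rewrite r2 ?g1 //; apply/itvccP; move/negbT: h; rewrite -ltNge => h; lra.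
Qed.

(* Two reparametrizations of a path by self-maps of [0,1] agreeing at the
   endpoints are path homotopic, via the straight-line homotopy r1 ~ r2. *)
Lemma reparam_phomotopic gam r1 r2 : is_path gam ->
  continuous r1 -> continuous r2 ->
  (forall s, unitI s -> unitI (r1 s)) -> (forall s, unitI s -> unitI (r2 s)) ->
  r1 0 = r2 0 -> r1 1 = r2 1 -> phomotopic (gam \o r1) (gam \o r2).
Proof.
move=> pg c1 c2 u1 u2 e0 e1.
exists (gam \o (fun p : R * R => (1 - p.2) * r1 p.1 + p.2 * r2 p.1)); split.
- apply: (@continuous_within_comp _ _ _ _ (@unitI R)) pg.
    apply: continuous_subspaceT; apply: add_cont; apply: mul_cont.
    + by apply: sub_cont; [exact: cst_continuous|exact: snd_cont].
    + by move=> p; apply: continuous_comp; [exact: fst_cont|exact: c1].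
    + exact: snd_cont.
    + by move=> p; apply: continuous_comp; [exact: fst_cont|exact: c2].
  move=> [s u] [/= s01 /itvccP [u0 u1']].
  have /itvccP [a0 a1] := u1 _ s01; have /itvccP [b0 b1] := u2 _ s01.
  by apply/itvccP; split; nra.
- by move=> s _ /=; rewrite subr0 mul1r mul0r addr0.
- by move=> s _ /=; rewrite subrr mul0r add0r mul1r.
- by move=> t _ /=; rewrite -e0 -mulrDl subrK mul1r.
- by move=> t _ /=; rewrite -e1 -mulrDl subrK mul1r.
Qed.

Lemma phclass_reparam gam r : is_path gam -> continuous r ->
  (forall s, unitI s -> unitI (r s)) -> r 0 = 0 -> r 1 = 1 ->
  phclass (gam \o r) = phclass gam.
Proof.
move=> pg cr ur r0 r1.
have id_r : phomotopic gam (gam \o r).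
  by apply: (@reparam_phomotopic gam id r) => //; exact: id_cont.
have r_id : phomotopic (gam \o r) gam.
  by apply: (@reparam_phomotopic gam r id) => //; exact: id_cont.
apply/seteqP; split => g [pg' hg]; split => //.
  exact: phom_trans id_r hg.
exact: phom_trans r_id hg.
Qed.
End paths.

Section squeeze.
Variables (R : realType) (eps : R).
Hypotheses (eps_gt0 : 0 < eps) (eps_small : 4 * eps <= 1).
(* The arithmetic tactics only read the goal context, so the proofs below
   restate these hypotheses locally. *)

(* The piecewise linear homeomorphism of [0,1] sending [0, eps], [eps, 1 - eps]
   and [1 - eps, 1] affinely onto [0, (2 + eps)/4], [(2 + eps)/4, (3 - eps)/4]
   and [(3 - eps)/4, 1]. *)
Definition squeeze (s : R) : R :=
  ((2 + eps) / 4) * (Order.min s eps / eps) +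
  (Order.min (Order.max s eps) (1 - eps) - eps) / 4 +
  ((1 + eps) / 4) * ((Order.max s (1 - eps) - (1 - eps)) / eps).

Lemma squeeze_cont : continuous squeeze.
Proof.
rewrite /squeeze; apply: add_cont; [apply: add_cont|].
- apply: mul_cont; first exact: cst_continuous.
  apply: mul_cont; last exact: cst_continuous.
  by apply: min_fun_continuous; [exact: id_cont|exact: cst_continuous].
- apply: mul_cont; last exact: cst_continuous.
  apply: sub_cont; last exact: cst_continuous.
  apply: min_fun_continuous; last exact: cst_continuous.
  by apply: max_fun_continuous; [exact: id_cont|exact: cst_continuous].
- apply: mul_cont; first exact: cst_continuous.
  apply: mul_cont; last exact: cst_continuous.
  apply: sub_cont; last exact: cst_continuous.
  by apply: max_fun_continuous; [exact: id_cont|exact: cst_continuous].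
Qed.

Lemma div_eps_unit (x : R) : 0 <= x <= eps -> 0 <= x / eps <= 1.
Proof.
move=> /andP[x0 x1]; apply/andP; split; first by rewrite divr_ge0 // ltW.
by rewrite ler_pdivrMr // mul1r.
Qed.

Lemma squeeze_low s : 0 <= s <= eps -> 0 <= squeeze s <= (2 + eps) / 4.
Proof.
have e0 := eps_gt0; have e4 := eps_small.
move=> /andP[s0 s1]; rewrite /squeeze min_l // max_r // min_l; last lra.
rewrite max_r; last lra.
rewrite subrr !mul0r ?mulr0 !addr0.
have /andP[q0 q1] := @div_eps_unit s (ltac:(apply/andP; split => //)).
apply/andP; split; nra.
Qed.

Lemma squeeze_mid s : eps <= s <= 1 - eps -> squeeze s = (s + 2) / 4.
Proof.
have e0 := eps_gt0; have e4 := eps_small.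
move=> /andP[s0 s1]; rewrite /squeeze min_r // max_l // min_l // max_r //.
by rewrite divff ?gt_eqF // subrr mul0r mulr0 addr0; field.
Qed.

Lemma squeeze_high s : 1 - eps <= s <= 1 -> (3 - eps) / 4 <= squeeze s <= 1.
Proof.
have e0 := eps_gt0; have e4 := eps_small.
move=> /andP[s0 s1]; rewrite /squeeze min_r; last lra.
rewrite max_l; last lra.
rewrite min_r; last lra.
rewrite max_l // divff ?gt_eqF //.
have /andP[q0 q1] := @div_eps_unit (s - (1 - eps)) (ltac:(apply/andP; split; lra)).
apply/andP; split; nra.
Qed.

Lemma squeeze0 : squeeze 0 = 0.
Proof.
have e0 := eps_gt0; have e4 := eps_small.
rewrite /squeeze min_l; last lra.
rewrite max_r; last lra.
rewrite min_l; last lra.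
rewrite max_r; last lra.
by rewrite !subrr ?mul0r ?mulr0 ?addr0 ?add0r.
Qed.

Lemma squeeze1 : squeeze 1 = 1.
Proof.
have e0 := eps_gt0; have e4 := eps_small.
rewrite /squeeze min_r; last lra.
rewrite max_l; last lra.
rewrite min_r; last lra.
rewrite max_l; last lra.
rewrite divff ?gt_eqF // (_ : 1 - (1 - eps) = eps); last by ring.
by rewrite divff ?gt_eqF //; field.
Qed.

Lemma squeeze_unitI s : unitI s -> unitI (squeeze s).
Proof.
have e0 := eps_gt0; have e4 := eps_small.
move=> /itvccP [s0 s1]; apply/itvccP.
have [h1|h1] := leP s eps.
  by have /andP[] := @squeeze_low s (ltac:(apply/andP; split => //)); lra.
have [h2|h2] := leP s (1 - eps).
  by rewrite squeeze_mid; [lra|apply/andP; split; lra].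
by have /andP[] := @squeeze_high s (ltac:(apply/andP; split => //; lra)); lra.
Qed.
End squeeze.

Definition end_collar (R : realType) (c eps : R) : set R :=
  [set u | unitI u /\ `|c - u| <= eps].

Section squeezed_concatenation.
Variables (R : realType) (X : topologicalType) (eps : R) (d alpha t : R -> X).
Hypotheses (eps_gt0 : 0 < eps) (eps_small : 4 * eps <= 1).

(* gam traverses t on [0, 1/2], alpha on [1/2, 3/4] and d on [3/4, 1]; after
   squeezing, alpha is traversed at unit speed on [eps, 1 - eps], while t, d
   and the eps-collars of alpha are crammed into the two ends. *)
Let gam : R -> X := pconcat (pconcat d alpha) t.

Lemma squeezed_mid s : eps <= s <= 1 - eps -> gam (squeeze eps s) = alpha s.
Proof.
have e0 := eps_gt0; have e4 := eps_small.
move=> /andP[s0 s1]; rewrite /gam /pconcat squeeze_mid //; last by apply/andP.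
rewrite ifF; last by apply/negbTE; rewrite -ltNge; lra.
rewrite ifT; last by lra.
by congr alpha; field.
Qed.

Lemma squeezed_low s : 0 <= s <= eps ->
  (t @` @unitI R `|` alpha @` end_collar 0 eps) (gam (squeeze eps s)).
Proof.
have e0 := eps_gt0; have e4 := eps_small.
move=> s0eps; have /andP[p0 p1] := squeeze_low e0 e4 s0eps.
rewrite /gam /pconcat; case: ifP => q1.
  by left; exists (2 * squeeze eps s) => //; apply/itvccP; lra.
move/negbT: q1; rewrite -ltNge => q1; rewrite ifT; last by lra.
right; exists (2 * (2 * squeeze eps s - 1)) => //; split.
  by apply/itvccP; lra.
by rewrite sub0r normrN ger0_norm; lra.
Qed.

Lemma squeezed_high s : 1 - eps <= s <= 1 ->
  (d @` @unitI R `|` alpha @` end_collar 1 eps) (gam (squeeze eps s)).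
Proof.
have e0 := eps_gt0; have e4 := eps_small.
move=> s1eps; have /andP[p0 p1] := squeeze_high e0 e4 s1eps.
rewrite /gam /pconcat ifF; last by apply/negbTE; rewrite -ltNge; lra.
case: ifP => q1.
  right; exists (2 * (2 * squeeze eps s - 1)) => //; split.
    by apply/itvccP; lra.
  by rewrite ger0_norm; lra.
move/negbT: q1; rewrite -ltNge => q1.
by left; exists (2 * (2 * squeeze eps s - 1) - 1) => //; apply/itvccP; lra.
Qed.
End squeezed_concatenation.

Lemma path_collar (R : realType) (X : topologicalType) (alpha : R -> X)
    (K : set R) (O : set X) (c : R) :
  is_path alpha -> compact K -> open O -> alpha @` K `<=` O -> unitI c ->
  \forall s \near c, unitI s -> (K c -> O (alpha s)) /\ (~ K c -> ~ K s).
Proof.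
move=> pa cK oO aKO uc; have [Kc|nKc] := pselect (K c).
  have Oac : O (alpha c) by apply: aKO; exists c.
  have near_O : \forall s \near c, unitI s -> O (alpha s).
    exact: (subspace_continuousP (@unitI R) alpha).1 pa c uc O
      (open_nbhs_nbhs (conj oO Oac)).
  apply: filterS near_O => s Os us.
  by split => // _; exact: Os us.
have clK : closed K by apply: compact_closed => //; exact: norm_hausdorff.
have : nbhs c (~` K) by apply: open_nbhs_nbhs; split => //; exact: closed_openC clK.
by apply: filterS => s nKs _; split.
Qed.

Section endpoint_neighbourhoods.
Variables (R : realType) (X : topologicalType) (alpha : R -> X).
Variables (n : nat) (K : nat -> set R) (O : nat -> set X).
Hypothesis pa : is_path alpha.
Hypothesis KO : forall i, (i < n)%N ->
  [/\ K i `<=` @unitI R, compact (K i), open (O i) & alpha @` K i `<=` O i].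

Definition endpoint_nbhd (c : R) : set X :=
  [set x | forall i, (i < n)%N -> K i c -> O i x].

Lemma endpoint_nbhd_open c : open (endpoint_nbhd c).
Proof.
rewrite openE => x Vx.
have : \forall y \near x, forall i : 'I_n, K i c -> O i y.
  apply: (filter_forall (f := fun (i : 'I_n) y => K i c -> O i y)).
  move=> -[i lt] /=; have [Kc|nKc] := pselect (K i c).
    have [_ _ oO _] := KO lt.
    by apply: filterS (open_nbhs_nbhs (conj oO (Vx i lt Kc))) => y Oy.
  by apply: nearW => y.
by apply: filterS => y Vy i lt; exact: Vy (Ordinal lt).
Qed.

Lemma endpoint_nbhd_alpha c : endpoint_nbhd c (alpha c).
Proof. by move=> i lt Kc; have [_ _ _] := KO lt; apply; exists c. Qed.

Definition collar (c eps : R) : Prop :=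
  forall s, end_collar c eps s -> forall i, (i < n)%N ->
    (K i c -> O i (alpha s)) /\ (~ K i c -> ~ K i s).

Lemma collar_exists c : unitI c -> exists2 eps, 0 < eps & collar c eps.
Proof.
move=> uc.
have : \forall s \near c, forall i : 'I_n,
    unitI s -> (K i c -> O i (alpha s)) /\ (~ K i c -> ~ K i s).
  apply: (@filter_forall R _ (fun (i : 'I_n) s =>
    unitI s -> (K i c -> O i (alpha s)) /\ (~ K i c -> ~ K i s)) (nbhs c)).
  move=> -[i lt] /=; have [_ cK oO aKO] := KO lt.
  exact: path_collar.
move=> /nbhs_ballP [e e_gt0 He]; have e_pos : (0 : R) < e := e_gt0.
exists (e / 2); first by lra.
move=> s [us cs] i lt; apply: (He s _ (Ordinal lt) us).
by rewrite /ball /=; lra.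
Qed.

Lemma collar_le c eps eps' : collar c eps -> eps' <= eps -> collar c eps'.
Proof. by move=> C le s [us cs]; apply: C; split => //; exact: le_trans le. Qed.

Lemma collar_constraint c eps (P : set X) i s w :
  collar c eps -> P `<=` endpoint_nbhd c -> (i < n)%N -> K i s ->
  `|c - s| <= eps -> (P `|` alpha @` end_collar c eps) w -> O i w.
Proof.
move=> C PV lt Ks cs; have [KI _ _ _] := KO lt.
have Kc : K i c.
  by apply: contrapT => nKc; exact: (C s (conj (KI s Ks) cs) i lt).2 nKc Ks.
case=> [Pw|[u cu <-]]; first exact: PV Pw i lt Kc.
exact: (C u cu i lt).1.
Qed.

Lemma squeezed_satisfies eps (d t : R -> X) :
  0 < eps -> 4 * eps <= 1 -> collar 0 eps -> collar 1 eps ->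
  d @` @unitI R `<=` endpoint_nbhd 1 -> t @` @unitI R `<=` endpoint_nbhd 0 ->
  forall i, (i < n)%N ->
    (pconcat (pconcat d alpha) t \o squeeze eps) @` K i `<=` O i.
Proof.
move=> e0 e4 C0 C1 dV tV i lt _ [s Ks <-]; have [KI _ _ aKO] := KO lt.
have /itvccP [s0 s1] := KI s Ks.
have [sl|sg] := leP s eps.
  apply: (collar_constraint C0 tV lt Ks); first by rewrite sub0r normrN ger0_norm.
  by apply: squeezed_low => //; apply/andP.
have [sm|sh] := leP s (1 - eps).
  by rewrite /= squeezed_mid //; [apply: aKO; exists s | apply/andP; split; lra].
apply: (collar_constraint C1 dV lt Ks); first by rewrite ger0_norm; lra.
by apply: squeezed_high => //; apply/andP; split; lra.
Qed.
End endpoint_neighbourhoods.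

Theorem lemma2p3 (R : realType) (X : topologicalType) :
  locally_path_connected R X -> semilocally_simply_connected R X ->
  forall M : set (set (R -> X)), COq_open M ->
  forall alpha : R -> X, is_path alpha -> M (phclass alpha) ->
  exists V1 V0 : set X,
    [/\ open V1, V1 (alpha 1), open V0, V0 (alpha 0) &
        Nbd alpha V1 V0 `<=` M].
Proof.
move=> _ _ M [_ [_ COM]] alpha pa Ma.
have [n [K [U [KU KUM]]]] := COM alpha (conj pa Ma).
have [e0 e0_gt0 C0] := collar_exists pa KU unitI0.
have [e1 e1_gt0 C1] := collar_exists pa KU unitI1.
pose eps := Order.min (Order.min e0 e1) 4^-1.
have eps_gt0 : 0 < eps by rewrite /eps !lt_min e0_gt0 e1_gt0 /=; lra.
have eps_small : 4 * eps <= 1.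
  by rewrite -ler_pdivlMl // mulr1 /eps !ge_min lexx orbT.
have C0' : collar alpha n K U 0 eps.
  by apply: (collar_le C0); rewrite /eps !ge_min lexx.
have C1' : collar alpha n K U 1 eps.
  by apply: (collar_le C1); rewrite /eps !ge_min lexx orbT.
exists (endpoint_nbhd n K U 1), (endpoint_nbhd n K U 0); split;
  [exact: (endpoint_nbhd_open KU) | exact: (endpoint_nbhd_alpha KU) |
   exact: (endpoint_nbhd_open KU) | exact: (endpoint_nbhd_alpha KU) | ].
move=> _ [d [[pd dV] d0] [t [[pt tV] t1] <-]].
set gam := pconcat (pconcat d alpha) t.
have pgam : is_path gam.
  apply: pconcat_path => //; first by apply: pconcat_path => //; rewrite d0.
  by rewrite t1 /pconcat ifT ?mulr0 //; lra.
rewrite -(phclass_reparam pgam (@squeeze_cont R eps) (squeeze_unitI eps_gt0 eps_small)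
  (squeeze0 eps_gt0 eps_small) (squeeze1 eps_gt0 eps_small)).
apply: (KUM _ _ (squeezed_satisfies KU eps_gt0 eps_small C0' C1' dV tV)).2.
apply: (@continuous_within_comp _ _ _ _ (@unitI R)) pgam => //.
  exact/continuous_subspaceT/squeeze_cont.
exact: squeeze_unitI.
Qed.
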